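(* Let $X=\{x_0,\ldots,x_m\}$, $\tilde X=\{\tilde x_1,\ldots,\tilde x_q\}$ (commuting), $d\in\mathbb{R}^p[[\tilde X]]$, $c\in\mathbb{R}^q\langle\langle X\rangle\rangle$ proper, and $e\in\mathbb{R}^m\langle\langle X\rangle\rangle$. Then $d\circ(c\,\tilde\circ\,\delta_e)=(d\circ c)\,\tilde\circ\,\delta_e$, where $\circ$ is the Wiener-Fliess composition product and $\tilde\circ$ the multiplicative mixed composition product.
   Context: $\mathbb{R}^\ell\langle\langle X\rangle\rangle$: formal power series in noncommuting letters of $X$ with coefficients in $\mathbb{R}^\ell$; proper means $(c,\emptyset)=0$; $c_i$ is the $i$-th component; products of vector-valued series are componentwise. $\mathbb{R}^p[[\tilde X]]$: formal power series in commuting letters with coefficients in $\mathbb{R}^p$. Shuffle product $\sqcup\!\sqcup$: bilinear, $(x_i\eta)\sqcup\!\sqcup(x_j\xi)=x_i(\eta\sqcup\!\sqcup x_j\xi)+x_j(x_i\eta\sqcup\!\sqcup\xi)$, $\eta\sqcup\!\sqcup\emptyset=\emptyset\sqcup\!\sqcup\eta=\eta$. Wiener-Fliess composition (for proper $c$): $d\circ c=\sum_{\tilde\eta\in\tilde X^\ast}(d,\tilde\eta)c^{\sqcup\!\sqcup\tilde\eta}$ with $c^{\sqcup\!\sqcup\emptyset}=1$, $c^{\sqcup\!\sqcup\tilde x_i\tilde\eta}=c_i\sqcup\!\sqcup c^{\sqcup\!\sqcup\tilde\eta}$. Multiplicative mixed composition of $c\in\mathbb{R}^r\langle\langle X\rangle\rangle$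 and $e\in\mathbb{R}^m\langle\langle X\rangle\rangle$: $c\,\tilde\circ\,\delta_e=\sum_{\eta\in X^\ast}(c,\eta)\bar\phi_e(\eta)(\mathbf 1)$, where $\mathbf 1=1\emptyset$ and $\bar\phi_e$ is the homomorphism from words (concatenation) to linear endomorphisms of $\mathbb{R}\langle\langle X\rangle\rangle$ (composition) with $\bar\phi_e(x_0)(w)=x_0w$, $\bar\phi_e(x_i)(w)=x_i(e_i\sqcup\!\sqcup w)$, $i\ge1$. *)

From HB Require Import structures.
From mathcomp Require Import all_boot all_order all_algebra.
From mathcomp Require Import reals.
Set Implicit Arguments. Unset Strict Implicit. Unset Printing Implicit Defensive.
Import Order.TTheory GRing.Theory Num.Theory.
Local Open Scope ring_scope.

Section NCSeries.
Variable R : comNzRingType.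
Variable A : finType.

Definition ser := seq A -> R.

Fixpoint words (n : nat) : seq (seq A) :=
  if n is n'.+1 then [seq a :: w | a <- enum A, w <- words n'] else [:: [::]].

(* shuffle of two words, as a list of words with multiplicity:
   (a u) sh (b v) = a (u sh b v) + b (a u sh v),  u sh [] = [] sh u = u *)
Fixpoint shw (u v : seq A) {struct u} : seq (seq A) :=
  match u with
  | [::] => [:: v]
  | a :: u' =>
    let fix shw_aux (v : seq A) : seq (seq A) :=
      match v with
      | [::] => [:: u]
      | b :: v' => [seq a :: z | z <- shw u' v] ++ [seq b :: z | z <- shw_aux v']
      end in shw_aux v
  end.

(* bilinear extension of the word shuffle to series:
   (c sh d, w) = sum_{u,v} (c,u) (d,v) (u sh v, w);
   only |u| + |v| = |w| can contribute, so the sum is finite. *)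
Definition shuffle (c d : ser) : ser := fun w =>
  \sum_(i < (size w).+1) \sum_(u <- words i) \sum_(v <- words (size w - i))
     c u * d v * (count_mem w (shw u v))%:R.

Definition one : ser := fun w => (w == [::])%:R.

Definition shpow (c : ser) (n : nat) : ser := iter n (shuffle c) one.

Definition proper_ser (l : nat) (c : 'I_l -> ser) : Prop := forall i, c i [::] = 0.

Definition prepend (a : A) (s : ser) : ser := fun w =>
  if w is b :: w' then (b == a)%:R * s w' else 0.

End NCSeries.

(* Commuting words over X~ = {x~_1,...,x~_q} are monomials, i.e. exponent
   vectors {ffun 'I_q -> nat}; d in R^p[[X~]] is d : 'I_p -> {ffun 'I_q -> nat} -> R. *)

(* c^{sh eta~} for a commutative word eta~ = x~_1^{n_1} ... x~_q^{n_q};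
   by commutativity/associativity of sh this is c_1^{sh n_1} sh ... sh c_q^{sh n_q} *)
Definition shpowv (R : comNzRingType) (A : finType) (q : nat)
  (c : 'I_q -> ser R A) (n : {ffun 'I_q -> nat}) : ser R A :=
  \big[@shuffle R A/@one R A]_(i < q) shpow (c i) (n i).

(* d o c = sum_{eta~} (d,eta~) c^{sh eta~}.  For proper c, c^{sh eta~} has
   order >= |eta~|, so only eta~ with all exponents <= |w| contribute to the
   coefficient of w: the sum below is this (finite) coefficient. *)
Definition wf_comp (R : comNzRingType) (A : finType) (p q : nat)
  (d : 'I_p -> {ffun 'I_q -> nat} -> R) (c : 'I_q -> ser R A) : 'I_p -> ser R A :=
  fun k w => \sum_(f : {ffun 'I_q -> 'I_(size w).+1})
               d k [ffun i => val (f i)] * shpowv c [ffun i => val (f i)] w.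

(* Alphabet X = {x_0,...,x_m} is 'I_m.+1; e in R^m<<X>> is e : 'I_m -> ser,
   with e_i (i >= 1) being e (i-1), obtained via unlift ord0. *)
Definition phi (R : comNzRingType) (m : nat) (e : 'I_m -> ser R 'I_m.+1)
  (a : 'I_m.+1) (s : ser R 'I_m.+1) : ser R 'I_m.+1 :=
  match unlift ord0 a with
  | None => prepend a s
  | Some j => prepend a (shuffle (e j) s)
  end.

(* phibar_e(eta)(1): phibar_e is the monoid morphism words -> (End, o) *)
Definition phibar1 (R : comNzRingType) (m : nat) (e : 'I_m -> ser R 'I_m.+1)
  (eta : seq 'I_m.+1) : ser R 'I_m.+1 :=
  foldr (phi e) (@one R 'I_m.+1) eta.

(* c ~o delta_e = sum_eta (c,eta) phibar_e(eta)(1).  phibar_e(eta)(1) is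
   supported on words of length >= |eta|, so the coefficient of w only
   involves |eta| <= |w|. *)
Definition mixed_comp (R : comNzRingType) (m r : nat)
  (c : 'I_r -> ser R 'I_m.+1) (e : 'I_m -> ser R 'I_m.+1) : 'I_r -> ser R 'I_m.+1 :=
  fun k w => \sum_(i < (size w).+1) \sum_(eta <- words 'I_m.+1 i)
               c k eta * phibar1 e eta w.

From Pilot Require Import Defs.
From HB Require Import structures.
From mathcomp Require Import all_boot all_order all_algebra.
From mathcomp Require Import reals zify.
From Stdlib Require Import FunctionalExtensionality.
Set Implicit Arguments. Unset Strict Implicit. Unset Printing Implicit Defensive.
Import Order.TTheory GRing.Theory Num.Theory.
Local Open Scope ring_scope.

(** Write [s ~o] for the multiplicative mixed composition with a
fixed [e], extended by [e_0 := 1], and [x_a^-1 s] for the left shift of [s].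
Unfolding one letter of the definition gives
[x_a^-1 (s ~o) = e_a sh ((x_a^-1 s) ~o)], and [x_a^-1] is a derivation of the
shuffle product; an induction on the length of words then shows that [~o] is
a unital shuffle morphism, hence commutes with every shuffle power
[c^{sh eta}].  As [~o] is also linear, and for proper [c] the coefficient of
a word [w] on either side only involves exponents at most [|w|], applying it
term by term to [d o c = sum (d, eta) c^{sh eta}] gives the theorem. *)

Section Shuffle.
Variables (R : comNzRingType) (A : finType).
Local Notation ser := (ser R A).
Local Notation ser1 := (@Defs.one R A).

Definition lder (a : A) (s : ser) : ser := fun w => s (a :: w).

Definition agree_upto (n : nat) (s t : ser) : Prop :=
  forall u, (size u <= n)%N -> s u = t u.

Definition vanishes_below (n : nat) (s : ser) : Prop :=
  forall u, (size u < n)%N -> s u = 0.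

Lemma words_size n (w : seq A) : w \in words A n -> size w = n.
Proof.
elim: n w => [|n IH] w /=; first by rewrite inE => /eqP ->.
by case/allpairsPdep => b [w' [_ /IH <- ->]].
Qed.

Lemma big_words_S (V : nmodType) n (F : seq A -> V) :
  \sum_(w <- words A n.+1) F w = \sum_(b <- enum A) \sum_(w <- words A n) F (b :: w).
Proof. exact: big_allpairs_dep. Qed.

Lemma big_enum_only (V : nmodType) (a : A) (G : A -> V) :
  (forall b, b != a -> G b = 0) -> \sum_(b <- enum A) G b = G a.
Proof. by move=> G0; rewrite big_enum (big_only1 a) // => b /G0. Qed.

Lemma shw_nil_r (u : seq A) : shw u [::] = [:: u].
Proof. by case: u. Qed.

Lemma count_map_cons (a b : A) w (L : seq (seq A)) :
  count_mem (a :: w) [seq b :: z | z <- L] = ((b == a) * count_mem w L)%N.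
Proof.
elim: L => [|z L IH] /=; first by rewrite muln0.
by rewrite IH eqseq_cons; case: (b == a); rewrite ?mul1n ?mul0n.
Qed.

Lemma count_shw_cons (a : A) w u v : count_mem (a :: w) (shw u v) =
  ((if u is b :: u' then (b == a) * count_mem w (shw u' v) else 0) +
   (if v is b :: v' then (b == a) * count_mem w (shw u v') else 0))%N.
Proof.
case: u => [|b u]; case: v => [|c v] //=.
- by rewrite eqseq_cons; case: (c == a); case: (v == w).
- by rewrite shw_nil_r /= eqseq_cons; case: (b == a); case: (u == w).
- by rewrite count_cat !count_map_cons.
Qed.

Lemma shuffle_nil (s t : ser) : shuffle s t [::] = s [::] * t [::].
Proof. by rewrite /shuffle big_ord1 !big_seq1 mulr1. Qed.

Lemma shuffle_cons (s t : ser) a w :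
  shuffle s t (a :: w) = shuffle (lder a s) t w + shuffle s (lder a t) w.
Proof.
pose F i (k : seq A -> seq A -> nat) := \sum_(u <- words A i)
  \sum_(v <- words A ((size w).+1 - i)) s u * t v * (k u v)%:R.
have left_letter : \sum_(i < (size w).+2) F i (fun u v =>
    if u is b :: u' then (b == a) * count_mem w (shw u' v) else 0)%N
  = shuffle (lder a s) t w.
  rewrite big_ord_recl [F _ _]big_seq1 big1 ?add0r => [|v _]; last by rewrite mulr0.
  apply: eq_bigr => i _; rewrite /F big_words_S (big_enum_only (a := a)).
    by apply: eq_bigr => u _; apply: eq_bigr => v _; rewrite eqxx mul1n.
  move=> b /negbTE ba; rewrite big1 // => u _; rewrite big1 // => v _.
  by rewrite ba mul0n mulr0.
have right_letter : \sum_(i < (size w).+2) F i (fun u v =>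
    if v is b :: v' then (b == a) * count_mem w (shw u v') else 0)%N
  = shuffle s (lder a t) w.
  rewrite big_ord_recr /F subnn /= [X in _ + X]big1 ?addr0 => [|u _]; last first.
    by rewrite big_seq1 mulr0.
  apply: eq_bigr => i _; apply: eq_bigr => u _.
  rewrite subSn ?big_words_S 1?(big_enum_only (a := a)) ?leq_ord //.
    by apply: eq_bigr => v _; rewrite eqxx mul1n.
  move=> b /negbTE ba; rewrite big1 // => v _.
  by rewrite ba mul0n mulr0.
rewrite -left_letter -right_letter -big_split; apply: eq_bigr => i _.
rewrite -big_split; apply: eq_bigr => u _; rewrite -big_split.
by apply: eq_bigr => v _; rewrite count_shw_cons natrD mulrDr.
Qed.

Lemma lder_shuffle a (s t : ser) :
  lder a (shuffle s t) = shuffle (lder a s) t \+ shuffle s (lder a t).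
Proof. by apply: functional_extensionality => w; apply: shuffle_cons. Qed.

Lemma shuffleC (s t : ser) : shuffle s t = shuffle t s.
Proof.
apply: functional_extensionality => w.
elim: w s t => [|a w IH] s t; first by rewrite !shuffle_nil mulrC.
by rewrite !shuffle_cons IH addrC IH.
Qed.

Lemma shuffleDr (s t1 t2 : ser) :
  shuffle s (t1 \+ t2) = shuffle s t1 \+ shuffle s t2.
Proof.
apply: functional_extensionality => w /=.
elim: w s t1 t2 => [|a w IH] s t1 t2; first by rewrite !shuffle_nil mulrDr.
by rewrite !shuffle_cons [lder a (t1 \+ t2)]/(lder a t1 \+ lder a t2) !IH addrACA.
Qed.

Lemma shuffleDl (s1 s2 t : ser) :
  shuffle (s1 \+ s2) t = shuffle s1 t \+ shuffle s2 t.
Proof. by rewrite shuffleC shuffleDr !(shuffleC t). Qed.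

Lemma shuffleA (s t u : ser) : shuffle s (shuffle t u) = shuffle (shuffle s t) u.
Proof.
apply: functional_extensionality => w.
elim: w s t u => [|a w IH] s t u; first by rewrite !shuffle_nil mulrA.
by rewrite !shuffle_cons !lder_shuffle shuffleDl shuffleDr /= !IH addrA.
Qed.

Lemma shuffle_sumr (I : Type) (r : seq I) (s : ser) (F : I -> ser) w :
  shuffle s (fun u => \sum_(i <- r) F i u) w = \sum_(i <- r) shuffle s (F i) w.
Proof.
elim: w s F => [|a w IH] s F.
  by rewrite shuffle_nil mulr_sumr; apply: eq_bigr => i _; rewrite shuffle_nil.
rewrite shuffle_cons !IH -big_split.
by apply: eq_bigr => i _; rewrite shuffle_cons.
Qed.

Lemma shuffle_scaler (s t : ser) (k : R) w :
  shuffle s (fun u => k * t u) w = k * shuffle s t w.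
Proof.
elim: w s t => [|a w IH] s t; first by rewrite !shuffle_nil mulrCA.
by rewrite !shuffle_cons !IH mulrDr.
Qed.

Lemma agree_upto_lder n a (s t : ser) :
  agree_upto n.+1 s t -> agree_upto n (lder a s) (lder a t).
Proof. by move=> st u le_un; apply: st. Qed.

Lemma agree_upto_le m n (s t : ser) :
  (m <= n)%N -> agree_upto n s t -> agree_upto m s t.
Proof. by move=> le_mn st u le_um; apply/st/(leq_trans le_um). Qed.

Lemma shuffle_agree n (s s' t t' : ser) :
  agree_upto n s s' -> agree_upto n t t' ->
  agree_upto n (shuffle s t) (shuffle s' t').
Proof.
elim: n s s' t t' => [|n IH] s s' t t' ss' tt' [|a w] //= le_wn;
  first [by rewrite !shuffle_nil ss' ?tt' | rewrite !shuffle_cons].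
by congr (_ + _); apply: IH => //;
  do ?[exact: agree_upto_lder | exact: agree_upto_le (leqnSn n) _].
Qed.

Lemma shuffle_agree_r w (s t t' : ser) :
  agree_upto (size w) t t' -> shuffle s t w = shuffle s t' w.
Proof. by move=> tt'; apply: (shuffle_agree (fun _ _ => erefl) tt'). Qed.

Lemma vanishes_below_lder n a (s : ser) :
  vanishes_below n s -> vanishes_below n.-1 (lder a s).
Proof. by move=> s0 u; rewrite ltn_predRL; apply: (s0 (a :: u)). Qed.

Lemma shuffle_vanishes n1 n2 (s t : ser) :
  vanishes_below n1 s -> vanishes_below n2 t ->
  vanishes_below (n1 + n2) (shuffle s t).
Proof.
move=> s0 t0 w; elim: w n1 n2 s t s0 t0 => [|a w IH] n1 n2 s t s0 t0 lt_w.
  rewrite shuffle_nil; case: n1 s0 lt_w => [|n1] s0 lt_w.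
    by rewrite t0 ?mulr0.
  by rewrite s0 ?mul0r.
rewrite shuffle_cons (IH n1.-1 n2) ?(IH n1 n2.-1) ?addr0 //;
  do ?[exact: vanishes_below_lder]; move: lt_w => /=; lia.
Qed.

Lemma shuffle1l (t : ser) : shuffle ser1 t = t.
Proof.
apply: functional_extensionality => w.
elim: w t => [|a w IH] t; first by rewrite shuffle_nil mul1r.
by rewrite shuffle_cons IH (@shuffle_vanishes (size w).+1 0) ?add0r ?addn0.
Qed.

Lemma shpow_vanishes (s : ser) n : s [::] = 0 -> vanishes_below n (shpow s n).
Proof.
by move=> s0; elim: n => [|n IH] //; apply: (@shuffle_vanishes 1 n) => // -[].
Qed.

Lemma shpowv_vanishes q (c : 'I_q -> ser) (f : {ffun 'I_q -> nat}) :
  proper_ser c -> vanishes_below (\sum_(i < q) f i) (shpowv c f).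
Proof.
move=> c0; apply: (big_rec2 vanishes_below) => [|i n s _ s0]; first by [].
exact/shuffle_vanishes/s0/shpow_vanishes.
Qed.

End Shuffle.

Section MixedComposition.
Variables (R : comNzRingType) (m : nat) (e : 'I_m -> ser R 'I_m.+1).
Local Notation A := 'I_m.+1.
Local Notation ser := (ser R A).
Local Notation ser1 := (@Defs.one R A).

(* the convention [e_0 := 1] makes [phi] uniform in the letter, see [phiE] *)
Definition e_ext (a : A) : ser :=
  if unlift ord0 a is Some j then e j else ser1.

Definition mixed (s : ser) : ser := mixed_comp (fun _ : 'I_1 => s) e ord0.

Lemma mixed_compE r (c : 'I_r -> ser) : mixed_comp c e = fun k => mixed (c k).
Proof. by []. Qed.

Lemma phiE a (s : ser) : phi e a s = prepend a (shuffle (e_ext a) s).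
Proof. by rewrite /phi /e_ext; case: unlift => [j|] //; rewrite shuffle1l. Qed.

Lemma phibar1_vanishes (eta : seq A) : vanishes_below (size eta) (phibar1 e eta).
Proof.
elim: eta => [|b eta IH] [|x u] //= lt_u_eta; rewrite phiE //=.
by rewrite (@shuffle_vanishes _ _ 0 (size eta) _ _ _ IH) ?mulr0.
Qed.

Lemma mixed_widen (s : ser) u N : (size u <= N)%N ->
  mixed s u = \sum_(i < N.+1) \sum_(eta <- words A i) s eta * phibar1 e eta u.
Proof.
move=> le_uN; rewrite /mixed /mixed_comp (big_ord_widen N.+1
  (fun i => \sum_(eta <- words A i) s eta * phibar1 e eta u)) // big_mkcond.
apply: eq_bigr => i _; case: ltnP => // lt_u_i.
rewrite big1_seq // => eta /andP[_ /words_size size_eta].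
by rewrite phibar1_vanishes ?mulr0 ?size_eta.
Qed.

Lemma mixed_agree w (s s' : ser) :
  agree_upto (size w) s s' -> mixed s w = mixed s' w.
Proof.
move=> ss'; apply: eq_bigr => i _; rewrite !big_seq; apply: eq_bigr => eta.
by move=> /words_size size_eta; rewrite ss' // size_eta -ltnS.
Qed.

Lemma mixed_nil (s : ser) : mixed s [::] = s [::].
Proof. by rewrite /mixed /mixed_comp big_ord1 big_seq1 mulr1. Qed.

Lemma lder_mixed a (s : ser) :
  lder a (mixed s) = shuffle (e_ext a) (mixed (lder a s)).
Proof.
apply: functional_extensionality => w.
rewrite /lder {1}/mixed /mixed_comp big_ord_recl big_seq1 mulr0 add0r.
under eq_bigr => i _.
  rewrite big_words_S (big_enum_only (a := a)) => [|b ba].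
    under eq_big_seq => eta _ do rewrite /= phiE /= eqxx mul1r.
    over.
  by rewrite big1 // => eta _; rewrite /= phiE /= eq_sym (negbTE ba) mul0r mulr0.
rewrite (@shuffle_agree_r _ _ w _ _ (fun u => \sum_(i < (size w).+1)
  \sum_(eta <- words A i) s (a :: eta) * phibar1 e eta u)) //; last first.
  by move=> u; apply: mixed_widen.
rewrite shuffle_sumr; apply: eq_bigr => i _; rewrite shuffle_sumr.
by apply: eq_bigr => eta _; rewrite shuffle_scaler.
Qed.

Lemma mixedD (s t : ser) : mixed (s \+ t) = mixed s \+ mixed t.
Proof.
apply: functional_extensionality => w; rewrite /= -big_split.
by apply: eq_bigr => i _; rewrite -big_split; apply: eq_bigr => eta _; rewrite mulrDl.
Qed.

Lemma mixed_sum (I : Type) (r : seq I) (F : I -> ser) w :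
  mixed (fun u => \sum_(i <- r) F i u) w = \sum_(i <- r) mixed (F i) w.
Proof.
rewrite exchange_big; apply: eq_bigr => j _; rewrite exchange_big.
by apply: eq_bigr => eta _; rewrite mulr_suml.
Qed.

Lemma mixed_scale (k : R) (s : ser) w : mixed (fun u => k * s u) w = k * mixed s w.
Proof.
rewrite mulr_sumr; apply: eq_bigr => i _; rewrite mulr_sumr.
by apply: eq_bigr => eta _; rewrite mulrA.
Qed.

Lemma mixed_shuffle (s t : ser) : mixed (shuffle s t) = shuffle (mixed s) (mixed t).
Proof.
(* [lder_mixed] reduces words of length [n.+1] to words of length [n]. *)
suff agree n : forall s t : ser,
    agree_upto n (mixed (shuffle s t)) (shuffle (mixed s) (mixed t)).
  by apply: functional_extensionality => w; apply: (agree (size w)).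
elim: n => [|n IH] {}s {}t [|a w] //=;
  rewrite ?mixed_nil ?shuffle_nil ?mixed_nil // ltnS => le_wn.
have IHw s' t' : shuffle (e_ext a) (mixed (shuffle s' t')) w =
                 shuffle (e_ext a) (shuffle (mixed s') (mixed t')) w.
  exact: shuffle_agree_r (agree_upto_le le_wn (IH s' t')).
rewrite -[mixed _ (a :: w)]/(lder a _ w) lder_mixed lder_shuffle mixedD shuffleDr /=.
rewrite !IHw shuffle_cons !lder_mixed -!shuffleA; congr (_ + _).
by rewrite shuffleA [shuffle (e_ext a) _]shuffleC -shuffleA.
Qed.

Lemma mixed1 : mixed ser1 = ser1.
Proof.
apply: functional_extensionality => w.
rewrite /mixed /mixed_comp big_ord_recl big_seq1 mul1r big1 ?addr0 // => i _.
by rewrite big_words_S big1 // => b _; rewrite big1 // => eta _; rewrite mul0r.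
Qed.

Lemma mixed_shpow (s : ser) n : mixed (shpow s n) = shpow (mixed s) n.
Proof. by elim: n => [|n IH]; rewrite /= ?mixed1 // mixed_shuffle IH. Qed.

Lemma mixed_shpowv q (c : 'I_q -> ser) (f : {ffun 'I_q -> nat}) :
  mixed (shpowv c f) = shpowv (fun i => mixed (c i)) f.
Proof.
apply: (big_rec2 (fun s t => mixed s = t)) => [|i s t _ <-]; first exact: mixed1.
by rewrite mixed_shuffle mixed_shpow.
Qed.

End MixedComposition.

Lemma big_ffun_ord_widen (V : nmodType) q M N (F : {ffun 'I_q -> nat} -> V) :
  (M <= N)%N -> (forall (n : {ffun 'I_q -> nat}) j, (M < n j)%N -> F n = 0) ->
  \sum_(f : {ffun 'I_q -> 'I_N.+1}) F [ffun i => val (f i)] =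
  \sum_(g : {ffun 'I_q -> 'I_M.+1}) F [ffun i => val (g i)].
Proof.
move=> le_MN F0.
rewrite (bigID (fun f : {ffun 'I_q -> 'I_N.+1} => [forall j, f j <= M]%N)) /=.
rewrite [X in _ + X]big1 ?addr0 => [|f /forallPn[j]]; last first.
  by rewrite -ltnNge => lt_Mfj; apply: (F0 _ j); rewrite ffunE.
have le_MN1 : (M.+1 <= N.+1)%N by [].
rewrite (reindex_onto
  (fun g : {ffun 'I_q -> 'I_M.+1} => [ffun i => widen_ord le_MN1 (g i)])
  (fun f : {ffun 'I_q -> 'I_N.+1} => [ffun i => inord (f i)])) /=; last first.
  move=> f /forallP f_le; apply/ffunP => j; rewrite !ffunE.
  by apply/val_inj; rewrite /= inordK ?ltnS ?f_le.
apply: eq_big => [g|g _]; last by congr F; apply/ffunP => j; rewrite !ffunE.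
apply/andP; split; first by apply/forallP => j; rewrite ffunE /= -ltnS.
by apply/eqP/ffunP => j; rewrite !ffunE; apply/val_inj; rewrite /= inordK.
Qed.

Lemma wf_comp_widen (R : comNzRingType) (A : finType) p q
    (d : 'I_p -> {ffun 'I_q -> nat} -> R) (c : 'I_q -> ser R A) k u N :
  proper_ser c -> (size u <= N)%N ->
  wf_comp d c k u = \sum_(f : {ffun 'I_q -> 'I_N.+1})
    d k [ffun i => val (f i)] * shpowv c [ffun i => val (f i)] u.
Proof.
move=> c_proper le_uN; rewrite /wf_comp (@big_ffun_ord_widen _ q (size u) N
  (fun n => d k n * shpowv c n u)) // => n j lt_u_nj.
rewrite shpowv_vanishes ?mulr0 //; apply: leq_trans lt_u_nj _.
by rewrite (bigD1 j) //= leq_addr.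
Qed.

Theorem theorem13 (R : realType) (m p q : nat)
  (d : 'I_p -> {ffun 'I_q -> nat} -> R)
  (c : 'I_q -> ser R 'I_m.+1) (e : 'I_m -> ser R 'I_m.+1) :
  proper_ser c ->
  wf_comp d (mixed_comp c e) = mixed_comp (wf_comp d c) e.
Proof.
move=> c_proper; rewrite !mixed_compE.
apply: functional_extensionality => k; apply: functional_extensionality => w.
rewrite (@mixed_agree _ _ _ w _ (fun u => \sum_(f : {ffun 'I_q -> 'I_(size w).+1})
  d k [ffun i => val (f i)] * shpowv c [ffun i => val (f i)] u)); last first.
  by move=> u; apply: wf_comp_widen.
rewrite mixed_sum; apply: eq_bigr => f _.
by rewrite mixed_scale mixed_shpowv.
Qed.
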